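(* In the setting of the blurring mean-shift iteration with $f$ PDD and fixed positive weights, let $C_1^{(t)}$ be the convex hull of $\{x_1^{(t)},\dots,x_N^{(t)}\}$ and let $C_1=\bigcap_{t\ge 0}C_1^{(t)}$. Then for every vertex (extreme point) $v$ of $C_1$ there exists at least one index $j\in\{1,\dots,N\}$ such that $\lim_{t\to\infty}x_j^{(t)}=v$.
   Context: Setting: $x_1,\dots,x_N\in\mathbb{R}^p$, fixed weights $w_1,\dots,w_N>0$, and $f:\mathbb{R}^p\to[0,1]$ PDD, meaning: $f(u)=1$ iff $u=0$; $f(u)=\varphi(\|u\|)$ for some $\varphi:[0,\infty)\to[0,1]$; $\varphi$ is decreasing (non-increasing). The blurring mean-shift iteration is $x_i^{(0)}=x_i$ and $x_i^{(t+1)}=\frac{\sum_{j=1}^N f(x_i^{(t)}-x_j^{(t)})w_jx_j^{(t)}}{\sum_{j=1}^N f(x_i^{(t)}-x_j^{(t)})w_j}$. The convex hulls $C_1^{(t)}$ are nested decreasing in $t$. *)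

From Stdlib Require Import Reals Lra.
Open Scope R_scope.

(* A point of R^p is represented by its coordinate function nat -> R;
   only the coordinates k < p are meaningful (all definitions below only
   look at coordinates k < p). *)
Definition vec := nat -> R.

Fixpoint sum_to (n : nat) (g : nat -> R) : R :=
  match n with
  | O => 0
  | S m => sum_to m g + g m
  end.

Definition veq (p : nat) (u v : vec) : Prop := forall k, (k < p)%nat -> u k = v k.

Definition vsub (u v : vec) : vec := fun k => u k - v k.

Definition vnorm (p : nat) (u : vec) : R := sqrt (sum_to p (fun k => u k * u k)).

Definition kern (p : nat) (phi : R -> R) (u : vec) : R := phi (vnorm p u).

Definition PDD (p : nat) (phi : R -> R) : Prop :=
  (forall r, 0 <= r -> 0 <= phi r <= 1) /\
  (forall r s, 0 <= r -> r <= s -> phi s <= phi r) /\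
  (forall u : vec, kern p phi u = 1 <-> veq p u (fun _ => 0)).

Definition bms_step (p N : nat) (phi : R -> R) (w : nat -> R) (X : nat -> vec)
  : nat -> vec :=
  fun i k =>
    sum_to N (fun j => kern p phi (vsub (X i) (X j)) * w j * X j k) /
    sum_to N (fun j => kern p phi (vsub (X i) (X j)) * w j).

Fixpoint bms (p N : nat) (phi : R -> R) (w : nat -> R) (x : nat -> vec) (t : nat)
  : nat -> vec :=
  match t with
  | O => x
  | S t' => bms_step p N phi w (bms p N phi w x t')
  end.

Definition in_hull (p N : nat) (X : nat -> vec) (y : vec) : Prop :=
  exists lam : nat -> R,
    (forall j, (j < N)%nat -> 0 <= lam j) /\
    sum_to N lam = 1 /\
    veq p y (fun k => sum_to N (fun j => lam j * X j k)).

Definition C1_set (p N : nat) (phi : R -> R) (w : nat -> R) (x : nat -> vec) (y : vec) : Prop :=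
  forall t : nat, in_hull p N (bms p N phi w x t) y.

Definition extreme_point (p : nat) (S : vec -> Prop) (v : vec) : Prop :=
  S v /\
  forall a b (s : R), S a -> S b -> 0 < s < 1 ->
    veq p v (fun k => s * a k + (1 - s) * b k) -> veq p a v /\ veq p b v.

Definition vconv (p : nat) (u : nat -> vec) (v : vec) : Prop :=
  forall k, (k < p)%nat -> Un_cv (fun t => u t k) (v k).

From Stdlib Require Import Reals IndefiniteDescription Classical FunctionalExtensionality.
From mathcomp Require Import all_boot all_order ssralg ssrnum fingroup perm archimedean.
From mathcomp Require Import Rstruct ring lra.
Import Order.TTheory GRing.Theory Num.Theory.
Set Implicit Arguments. Unset Strict Implicit. Unset Printing Implicit Defensive.
Local Open Scope ring_scope.

(* Write X t for the configuration x^(t) and C_1 for the intersection of the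
   convex hulls of the X t.  The proof has three ingredients.

   1. Every trajectory t |-> X t i converges.  Each coordinate evolves by
      z (t+1) = A_t z t, with A_t stochastic, diagonal bounded below and
      A_t i j <= K * A_t j i (the kernel is symmetric and f(0) = 1).  For such
      dynamics the sum of the sorted values weighted by b^rank is a
      Lyapunov function for every small b > 0 (a majorization inequality);
      peeling off sorted values one at a time shows that all of them
      converge, and a gap argument transfers this to the individual indices.
   2. Hulls of finitely many points are closed, so the limits y i lie in C_1
      and every point of C_1 lies in the hull of the limits.
   3. An extreme point of a convex set that is a convex combination of
      points of the set is one of them; applied to v in hull(y), v = y j. *)

(* For z : 'I_N -> R, index j precedes i when z j > z i,
   ties being broken by the index; rank z i is the number of indices
   preceding i, and rank_perm z is the resulting permutation of 'I_N
   (rank 0 carries a largest value). *)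
Section Rank.
Variable N : nat.
Implicit Types (z : 'I_N -> R) (i j k : 'I_N).

Definition prec z j i : bool := (z i < z j) || ((z j == z i) && (j < i)%N).

Lemma prec_irr z i : ~~ prec z i i.
Proof. by rewrite /prec ltxx eqxx ltnn. Qed.

Lemma prec_trans z i j k : prec z j i -> prec z i k -> prec z j k.
Proof.
rewrite /prec => /orP [hji | /andP [/eqP eji lji]] /orP [hik | /andP [/eqP eik lik]].
- by rewrite (lt_trans hik hji).
- by rewrite -eik hji.
- by rewrite eji hik.
- by rewrite eji eik eqxx (ltn_trans lji lik) orbT.
Qed.

Lemma prec_total z i j : i != j -> prec z i j || prec z j i.
Proof.
move=> hij; rewrite /prec; case: (ltgtP (z i) (z j)) => //= _.
by case: ltngtP => // /val_inj eij; rewrite eij eqxx in hij.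
Qed.

Definition rank z i : nat := #|[set j | prec z j i]|.

Lemma rank_lt z i : (rank z i < N)%N.
Proof.
rewrite -[N]card_ord -cardsT /rank; apply: proper_card; apply/properP.
split; first exact: subsetT.
by exists i; rewrite !inE ?prec_irr.
Qed.

Lemma rank_prec z i j : prec z i j -> (rank z i < rank z j)%N.
Proof.
move=> hij; apply: proper_card; apply/properP; split.
  by apply/subsetP => k; rewrite !inE => hki; apply: prec_trans hki hij.
by exists i; rewrite !inE ?prec_irr.
Qed.

Lemma rank_inj z : injective (rank z).
Proof.
move=> i j e; apply/eqP; apply/negPn/negP => /(prec_total z) /orP [] /rank_prec;
  by rewrite e ltnn.
Qed.

Definition rank_ord z i : 'I_N := Ordinal (rank_lt z i).

Lemma rank_ord_inj z : injective (rank_ord z).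
Proof. by move=> i j /(congr1 val) /rank_inj. Qed.

Definition rank_perm z : {perm 'I_N} := perm (@rank_ord_inj z).

Lemma rank_perm_mono z i j : (rank_perm z i < rank_perm z j)%N -> z j <= z i.
Proof.
rewrite !permE /= => hr; rewrite leNgt; apply/negP => hz.
have := rank_prec (z := z) (i := j) (j := i); rewrite /prec hz => /(_ isT).
by rewrite ltnNge ltnW.
Qed.

End Rank.

Section Geometric.
Variable b : R.
Hypotheses (hb0 : 0 < b) (hb1 : b <= 1/4).

Lemma geom_ge0 n : 0 <= b ^+ n.
Proof. by apply: exprn_ge0; apply: ltW. Qed.

Lemma geom_antitone m n : (m <= n)%N -> b ^+ n <= b ^+ m.
Proof. by move=> hmn; apply: (ler_wiXn2l (x := b)); [apply: ltW | have := hb1; lra |]. Qed.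

Lemma geom_sum n : (1 - b) * \sum_(k < n) b ^+ k = 1 - b ^+ n.
Proof.
elim: n => [|n IH]; first by rewrite big_ord0 expr0; lra.
by rewrite big_ord_recr /= mulrDr IH exprS; ring.
Qed.

Lemma geom_sum_ge0 n : 0 <= \sum_(k < n) b ^+ k.
Proof. by apply: sumr_ge0 => k _; apply: geom_ge0. Qed.

Lemma geom_tail m n : (m <= n)%N ->
  \sum_(k < n) b ^+ k - \sum_(k < m) b ^+ k <= 4/3 * b ^+ m.
Proof.
move=> hmn.
have hD : 0 <= \sum_(k < n) b ^+ k - \sum_(k < m) b ^+ k.
  rewrite (big_ord_widen n _ hmn) [X in X - _](bigID (fun k : 'I_n => (k < m)%N)) /=.
  suff : 0 <= \sum_(k < n | ~~ (k < m)%N) b ^+ k by lra.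
  by apply: sumr_ge0 => k _; apply: geom_ge0.
have := geom_sum n; have := geom_sum m; have := geom_ge0 n; have := geom_ge0 m.
have := hb1; move: hD; set D := (X in 0 <= X) => hD *.
have : (1 - b) * D <= b ^+ m by rewrite /D mulrBr; lra.
nra.
Qed.

End Geometric.

Section Majorization.
Variable N : nat.
Variable a : 'I_N -> 'I_N -> R.
Variables c K b : R.
Hypothesis ha0 : forall i j, 0 <= a i j.
Hypothesis ha1 : forall i, \sum_j a i j = 1.
Hypothesis hdiag : forall i, c <= a i i.
Hypothesis hsym : forall i j, a i j <= K * a j i.
Hypothesis hb0 : 0 < b.
Hypothesis hbK : b * K <= 1.
Hypothesis hbc : 4 * b <= c.
Hypothesis hc1 : c <= 1.
Implicit Types (S : {set 'I_N}) (i j : 'I_N).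

Let hb1 : b <= 1/4. Proof. by have := hbc; have := hc1; lra. Qed.

Definition mass S i := \sum_(j in S) a i j.

Lemma mass_ge0 S i : 0 <= mass S i.
Proof. by apply: sumr_ge0. Qed.

Lemma mass_compl S i : mass S i + mass (~: S) i = 1.
Proof.
rewrite -(ha1 i) [RHS](bigID (mem S)) /=; congr (_ + _).
by apply: eq_bigl => j; rewrite inE.
Qed.

Lemma mass_le1 S i : mass S i <= 1.
Proof. by have := mass_compl S i; have := mass_ge0 (~: S) i; lra. Qed.

(* A row outside S keeps at least c on its diagonal, hence outside S. *)
Lemma mass_out S i : i \notin S -> mass S i <= 1 - c.
Proof.
move=> hi; have := mass_compl S i; have := hdiag i.
have : a i i <= mass (~: S) i.
  rewrite /mass (bigD1 i) ?inE //=.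
  have : 0 <= \sum_(j in ~: S | j != i) a i j by apply: sumr_ge0.
  lra.
lra.
Qed.

(* K is nonnegative (in fact at least 1), from a i i <= K * a i i. *)
Lemma K_ge0 i : 0 <= K.
Proof. by have := hsym i i; have := hdiag i; have := hbc; have := hb0; nra. Qed.

Lemma cut_balance S :
  \sum_(i in ~: S) mass S i <= K * \sum_(j in S) mass (~: S) j.
Proof.
rewrite mulr_sumr /mass exchange_big /=; apply: ler_sum => j hj.
rewrite mulr_sumr; apply: ler_sum => i _; exact: hsym.
Qed.

Lemma card_set_le S : (#|S| <= N)%N.
Proof. by have := max_card S; rewrite card_ord. Qed.

Variable r : {perm 'I_N}.
Local Notation B i := (b ^+ (r i)).

Definition top m : {set 'I_N} := [set i | (r i < m)%N].

Lemma sum_top m : (m <= N)%N -> \sum_(i in top m) B i = \sum_(k < m) b ^+ k.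
Proof.
move=> hm; rewrite (big_ord_widen N _ hm) [RHS](reindex_inj (@perm_inj _ r)) /=.
by apply: eq_bigl => i; rewrite inE.
Qed.

Lemma card_top m : (m <= N)%N -> #|top m| = m.
Proof.
move=> hm; have -> : top m = r @^-1: [set k : 'I_N | (k < m)%N].
  by apply/setP => i; rewrite !inE.
rewrite card_preimset; last exact: perm_inj.
rewrite -sum1_card (eq_bigl (fun k : 'I_N => (k < m)%N)); last by move=> k; rewrite inE.
by rewrite -(big_ord_widen N (fun=> 1%N) hm) sum1_card card_ord.
Qed.

(* The uniform deficit forced by a misplaced row. *)
Definition kappa := c / 2 * b ^+ N.

Lemma kappa_ge0 : 0 <= kappa.
Proof. by have := geom_ge0 hb0 N; have := hbc; have := hb0; rewrite /kappa; nra. Qed.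

(* If a row i0 among the #|S| best-ranked rows lies outside S, it keeps
   mass c outside S, so the weighted mass into S falls short by kappa. *)
Lemma major_strict S i0 :
  (r i0 < #|S|)%N -> i0 \notin S ->
  \sum_i B i * mass S i <= \sum_(k < #|S|) b ^+ k - kappa.
Proof.
move=> hr hi0.
have hSN : (#|S| <= N)%N by exact: card_set_le.
have hB i : 0 <= B i by exact: geom_ge0.
rewrite (bigD1 i0) //=.
have h1 : \sum_(i | i != i0) B i * mass S i <= \sum_(i | i != i0) B i.
  apply: ler_sum => i _; have := mass_le1 S i; have := mass_ge0 S i; have := hB i; nra.
have h2 : B i0 * mass S i0 <= B i0 * (1 - c) by apply: ler_wpM2l; rewrite ?mass_out.
have h3 : \sum_(k < N) b ^+ k = B i0 + \sum_(i | i != i0) B i.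
  by rewrite [LHS](reindex_inj (@perm_inj _ r)) (bigD1 i0).
have h4 := geom_tail hb0 hb1 hSN.
have h5 : b ^+ #|S| <= b * B i0 by rewrite -exprS; apply: (geom_antitone hb0 hb1).
have h6 : b ^+ N <= B i0 by apply: (geom_antitone hb0 hb1); exact: ltnW.
have := hB i0; have := hbc; have := hc1; have := hb0; rewrite /kappa; nra.
Qed.

Lemma major_aligned S : S = top #|S| ->
  \sum_i B i * mass S i <= \sum_(k < #|S|) b ^+ k.
Proof.
move=> hS; set m := #|S|.
have hSN : (m <= N)%N by exact: card_set_le.
have hin i : (i \in S) = (r i < m)%N by rewrite {1}hS inE.
have hout : \sum_(i in ~: S) B i * mass S i <= \sum_(j in S) B j * mass (~: S) j.
  apply: (@le_trans _ _ (b ^+ m * \sum_(i in ~: S) mass S i)).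
    rewrite mulr_sumr; apply: ler_sum => i; rewrite inE hin -leqNgt => hi.
    by apply: ler_wpM2r; [apply: mass_ge0 | apply: (geom_antitone hb0 hb1)].
  apply: (@le_trans _ _ (b ^+ m * K * \sum_(j in S) mass (~: S) j)).
    by rewrite -mulrA; apply: ler_wpM2l; [apply: geom_ge0 | apply: cut_balance].
  rewrite mulr_sumr; apply: ler_sum => j; rewrite hin => hj.
  apply: ler_wpM2r; first exact: mass_ge0.
  have : b ^+ m <= b * B j by rewrite -exprS; apply: (geom_antitone hb0 hb1).
  by have := geom_ge0 hb0 (r j); have := hbK; have := K_ge0 j; nra.
rewrite (bigID (mem S)) /=.
have -> : \sum_(i | i \notin S) B i * mass S i = \sum_(i in ~: S) B i * mass S i.
  by apply: eq_bigl => i; rewrite inE.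
have : \sum_(j in S) B j * mass S j + \sum_(j in S) B j * mass (~: S) j = \sum_(k < m) b ^+ k.
  rewrite -big_split /= -(sum_top hSN) -hS; apply: eq_bigr => j _.
  by rewrite -mulrDr mass_compl mulr1.
lra.
Qed.

(* The majorization inequality: either some best-ranked row is missing
   from S (major_strict), or S is aligned with the ranking. *)
Lemma major S : \sum_i B i * mass S i <= \sum_(k < #|S|) b ^+ k.
Proof.
have hSN : (#|S| <= N)%N by exact: card_set_le.
case: (boolP [exists i, (r i < #|S|)%N && (i \notin S)]).
  by case/existsP => i0 /andP [h1 h2]; have := major_strict h1 h2; have := kappa_ge0; lra.
rewrite negb_exists => /forallP hall; apply: major_aligned.
apply/eqP; rewrite eq_sym eqEcard card_top // leqnn andbT.
apply/subsetP => i; rewrite inE => hi.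
by have := hall i; rewrite hi /= negbK.
Qed.

End Majorization.

Lemma abel (e y : nat -> R) n :
  \sum_(k < n.+1) e k * y k =
  \sum_(m < n) (\sum_(k < m.+1) e k) * (y m - y m.+1) + (\sum_(k < n.+1) e k) * y n.
Proof.
elim: n => [|n IH]; first by rewrite big_ord0 !big_ord1 add0r.
rewrite big_ord_recr /= IH [in RHS]big_ord_recr /=.
by rewrite [\sum_(k < n.+2) e k]big_ord_recr /=; ring.
Qed.

Section Lyapunov.
Variable n : nat.
Local Notation N := n.+1.
Implicit Types (z : 'I_N -> R).

Definition Phi (b : R) z := \sum_i b ^+ (rank_perm z i) * z i.

Definition Az (a : 'I_N -> 'I_N -> R) z i := \sum_j a i j * z j.

Definition sorted_val z (k : nat) := z ((rank_perm z)^-1%g (inord k)).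

Definition upper z m := top (rank_perm z) m.

Lemma sum_inord (F : 'I_N -> R) : \sum_i F i = \sum_(k < N) F (inord k).
Proof. by apply: eq_bigr => i _; rewrite inord_val. Qed.

Lemma sorted_val_rank z i : z i = sorted_val z (rank_perm z i).
Proof. by rewrite /sorted_val inord_val permK. Qed.

Lemma Phi_sorted b z : Phi b z = \sum_(k < N) b ^+ k * sorted_val z k.
Proof.
rewrite /Phi (reindex_inj (@perm_inj _ (rank_perm z)^-1%g)) /= sum_inord.
by apply: eq_bigr => k _; rewrite permKV /sorted_val inordK ?ltn_ord.
Qed.

Lemma sorted_val_mono z k k' : (k <= k')%N -> (k' < N)%N ->
  sorted_val z k' <= sorted_val z k.
Proof.
rewrite leq_eqVlt => /orP [/eqP -> // | hk] hk'.
by apply: rank_perm_mono; rewrite !permKV !inordK // (ltn_trans hk hk').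
Qed.

Variables (a : 'I_N -> 'I_N -> R) (c K b : R).
Hypothesis ha0 : forall i j, 0 <= a i j.
Hypothesis ha1 : forall i, \sum_j a i j = 1.
Hypothesis hdiag : forall i, c <= a i i.
Hypothesis hsym : forall i j, a i j <= K * a j i.
Hypothesis hb0 : 0 < b.
Hypothesis hbK : b * K <= 1.
Hypothesis hbc : 4 * b <= c.
Hypothesis hc1 : c <= 1.

Section OneStep.
Variable z : 'I_N -> R.
Let r := rank_perm (Az a z).
Let col_weight j := \sum_i b ^+ (r i) * a i j.
(* Weight lost by j during the step, listed in the order of sorted_val z. *)
Let e k := let j := (rank_perm z)^-1%g (inord k) in b ^+ (rank_perm z j) - col_weight j.
Let E m := \sum_(k < m) e k.

Lemma Phi_diff : Phi b z - Phi b (Az a z) = \sum_(k < N) e k * sorted_val z k.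
Proof.
have -> : Phi b (Az a z) = \sum_j col_weight j * z j.
  rewrite /Phi /Az /col_weight; under eq_bigr do rewrite mulr_sumr.
  rewrite exchange_big /=; apply: eq_bigr => j _; rewrite mulr_suml.
  by apply: eq_bigr => i _; rewrite mulrA.
rewrite /Phi -sumrB (reindex_inj (@perm_inj _ (rank_perm z)^-1%g)) /= sum_inord.
by apply: eq_bigr => k _; rewrite /e /sorted_val inord_val; ring.
Qed.

Lemma col_weight_set (S : {set 'I_N}) :
  \sum_(j in S) col_weight j = \sum_i b ^+ (r i) * mass a S i.
Proof.
by rewrite /col_weight exchange_big /=; apply: eq_bigr => i _; rewrite /mass mulr_sumr.
Qed.

Lemma E_upper m : (m <= N)%N ->
  E m = \sum_(k < m) b ^+ k - \sum_(j in upper z m) col_weight j.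
Proof.
move=> hm; rewrite /E (big_ord_widen N e hm) -(sum_top b (rank_perm z) hm) -sumrB.
rewrite [RHS](reindex_inj (@perm_inj _ (rank_perm z)^-1%g)) /=.
apply: eq_big => [k | k _]; first by rewrite inE permKV.
by rewrite /e inord_val permKV.
Qed.

(* By majorization the partial sums are nonnegative, *)
Lemma E_ge0 m : (m <= N)%N -> 0 <= E m.
Proof.
move=> hm; rewrite E_upper // col_weight_set.
have := major ha0 ha1 hdiag hsym hb0 hbK hbc hc1 r (upper z m).
by rewrite card_top //; lra.
Qed.

(* the total sum vanishes since a is stochastic, *)
Lemma E_total : E N = 0.
Proof.
rewrite E_upper //.
have -> : \sum_(j in upper z N) col_weight j = \sum_j col_weight j.
  by apply: eq_bigl => j; rewrite !inE ltn_ord.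
rewrite /col_weight exchange_big /=.
under [X in _ - X]eq_bigr do rewrite -mulr_sumr ha1 mulr1.
by rewrite [X in X - _](reindex_inj (@perm_inj _ r)) subrr.
Qed.

Lemma E_strict m : (m <= N)%N -> upper (Az a z) m != upper z m ->
  kappa N c b <= E m.
Proof.
move=> hm hne; rewrite E_upper // col_weight_set.
have : ~~ (upper (Az a z) m \subset upper z m).
  by apply: contra hne => hs; rewrite eqEcard hs /= !card_top.
case/subsetPn => i0; rewrite inE => h1 h2.
have := major_strict ha0 ha1 hdiag hb0 hbc hc1 (r := r) (S := upper z m) (i0 := i0).
by rewrite card_top //; move/(_ h1 h2); lra.
Qed.

Lemma Phi_diff_parts : Phi b z - Phi b (Az a z) =
  \sum_(m < n) E m.+1 * (sorted_val z m - sorted_val z m.+1).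
Proof. by rewrite Phi_diff abel -/(E N) E_total mul0r addr0. Qed.

Lemma Phi_parts_ge0 (m : 'I_n) :
  0 <= E m.+1 * (sorted_val z m - sorted_val z m.+1).
Proof.
apply: mulr_ge0; first by apply: E_ge0; rewrite ltnS ltnW.
by rewrite subr_ge0; apply: sorted_val_mono; rewrite // ltnS.
Qed.

Lemma Phi_dec : Phi b (Az a z) <= Phi b z.
Proof.
suff : 0 <= Phi b z - Phi b (Az a z) by lra.
by rewrite Phi_diff_parts; apply: sumr_ge0 => m _; apply: Phi_parts_ge0.
Qed.

Lemma Phi_drop m : (m < n)%N -> upper (Az a z) m.+1 != upper z m.+1 ->
  kappa N c b * (sorted_val z m - sorted_val z m.+1) <= Phi b z - Phi b (Az a z).
Proof.
move=> hm hne; rewrite Phi_diff_parts (bigD1 (Ordinal hm)) //=.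
have hrest : 0 <= \sum_(i < n | i != Ordinal hm)
    E i.+1 * (sorted_val z i - sorted_val z i.+1).
  by apply: sumr_ge0 => i _; apply: Phi_parts_ge0.
have hgap : 0 <= sorted_val z m - sorted_val z m.+1.
  by rewrite subr_ge0; apply: sorted_val_mono; rewrite // ltnS.
have := ler_wpM2r hgap (E_strict (leqW hm) hne).
lra.
Qed.

End OneStep.
End Lyapunov.

Definition cvg (u : nat -> R) (L : R) :=
  forall eps : R, 0 < eps -> exists T, forall t, (T <= t)%N -> `|u t - L| < eps.

Lemma cvg_Un_cv (u : nat -> R) L : cvg u L -> Un_cv u L.
Proof.
move=> h eps /RltP /h [T hT]; exists T => t /ssrnat.leP ht.
by rewrite RdistE; apply/RltP; apply: hT.
Qed.

Lemma cvg_ext (u v : nat -> R) L : (forall t, u t = v t) -> cvg u L -> cvg v L.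
Proof. by move=> h hu eps /hu [T hT]; exists T => t /hT; rewrite h. Qed.

Lemma cvg_shift (u : nat -> R) L s : cvg u L -> cvg (fun t => u (s + t)%N) L.
Proof.
move=> h eps /h [T hT]; exists T => t ht; apply: hT.
exact: leq_trans ht (leq_addl _ _).
Qed.

Lemma cauchy_cvg (u : nat -> R) :
  (forall eps : R, 0 < eps -> exists T, forall t s,
     (T <= t)%N -> (T <= s)%N -> `|u t - u s| < eps) ->
  exists L, cvg u L.
Proof.
move=> h.
have [L hL] : {L | Un_cv u L}.
  apply: R_complete => eps /RltP /h [T hT].
  exists T => t s /ssrnat.leP ht /ssrnat.leP hs; rewrite RdistE; apply/RltP; exact: hT.
exists L => eps /RltP /hL [T hT]; exists T => t /ssrnat.leP /hT.
by rewrite RdistE => /RltP.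
Qed.

Lemma dec_cvg (u : nat -> R) lb :
  (forall t, u t.+1 <= u t) -> (forall t, lb <= u t) -> exists L, cvg u L.
Proof.
move=> hd hb.
have [L hL] : {L | Un_cv u L}.
  apply: decreasing_cv; first by move=> t; apply/RleP.
  exists (- lb) => _ [t ->]; rewrite /opp_seq RoppE; apply/RleP.
  by have := hb t; lra.
exists L => eps /RltP /hL [T hT]; exists T => t /ssrnat.leP /hT.
by rewrite RdistE => /RltP.
Qed.

Lemma cvg_lin (u v : nat -> R) L1 L2 x y :
  cvg u L1 -> cvg v L2 -> cvg (fun t => x * u t + y * v t) (x * L1 + y * L2).
Proof.
move=> hu hv eps heps.
set M := `|x| + `|y| + 1.
have hM : 0 < M by rewrite /M; have := normr_ge0 x; have := normr_ge0 y; lra.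
have [T1 h1] := hu _ (divr_gt0 heps hM); have [T2 h2] := hv _ (divr_gt0 heps hM).
exists (maxn T1 T2) => t; rewrite geq_max => /andP [/h1 e1 /h2 e2].
have -> : x * u t + y * v t - (x * L1 + y * L2) = x * (u t - L1) + y * (v t - L2) by ring.
apply: le_lt_trans (ler_normD _ _) _; rewrite !normrM.
have hMe : M * (eps / M) = eps by rewrite mulrCA mulfV ?mulr1 // gt_eqF.
have := normr_ge0 x; have := normr_ge0 y.
have := normr_ge0 (u t - L1); have := normr_ge0 (v t - L2).
rewrite /M in hMe; nra.
Qed.

Lemma cvg_le (u v : nat -> R) L1 L2 :
  (forall t, u t <= v t) -> cvg u L1 -> cvg v L2 -> L1 <= L2.
Proof.
move=> h h1 h2; rewrite leNgt; apply/negP => hlt.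
have he : 0 < (L1 - L2) / 2 by apply: divr_gt0 => //; lra.
have [T1 e1] := h1 _ he; have [T2 e2] := h2 _ he.
have := e1 (maxn T1 T2) (leq_maxl _ _); have := e2 (maxn T1 T2) (leq_maxr _ _).
have := h (maxn T1 T2); rewrite !ltr_norml => ? /andP [? ?] /andP [? ?]; lra.
Qed.

Lemma eventually_all (P : nat -> nat -> Prop) n :
  (forall m, (m < n)%N -> exists T, forall t, (T <= t)%N -> P m t) ->
  exists T, forall t, (T <= t)%N -> forall m, (m < n)%N -> P m t.
Proof.
elim: n => [|n IH] h; first by exists 0%N.
have [T1 h1] := IH (fun m hm => h m (ltnW hm)).
have [T2 h2] := h n (ltnSn n).
exists (maxn T1 T2) => t; rewrite geq_max => /andP [ht1 ht2] m.
by rewrite ltnS leq_eqVlt => /orP [/eqP -> | /h1]; [apply: h2 | apply].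
Qed.

(* For each
   small b > 0 the function Phi b (z t) decreases, hence converges; peeling
   off one sorted value at a time (Psi k b is the tail of Phi b from the
   k-th largest value on) shows that all sorted values converge.  Where the
   limits of two consecutive sorted values differ, the sets of largest
   entries must eventually freeze (Phi_drop); so each index eventually stays
   among ranks with one common limit, and its own value converges. *)
Section Dynamics.
Variable n : nat.
Local Notation N := n.+1.
Variable a : nat -> 'I_N -> 'I_N -> R.
Variables c K : R.
Hypothesis ha0 : forall t i j, 0 <= a t i j.
Hypothesis ha1 : forall t i, \sum_j a t i j = 1.
Hypothesis hdiag : forall t i, c <= a t i i.
Hypothesis hsym : forall t i j, a t i j <= K * a t j i.
Hypothesis hc0 : 0 < c.
Hypothesis hc1 : c <= 1.
Variable z : nat -> 'I_N -> R.
Hypothesis hz : forall t, z t.+1 = Az (a t) (z t).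

(* The diagonal bound forces K >= 1. *)
Lemma K_ge1 : 1 <= K.
Proof. by have := hsym 0 ord0 ord0; have := hdiag 0 ord0; have := hc0; nra. Qed.

(* The admissible geometric ratios are those in (0, b0]. *)
Definition b0 := c / (4 * K).

Lemma b0_gt0 : 0 < b0.
Proof. by have := K_ge1; have := hc0 => *; apply: divr_gt0 => //; lra. Qed.

Lemma b_ok b : 0 < b -> b <= b0 -> [/\ b * K <= 1, 4 * b <= c & b <= 1/4].
Proof.
move=> hb; rewrite /b0 ler_pdivlMr; last by have := K_ge1; lra.
move=> h; have := K_ge1; have := hc1 => *; split; nra.
Qed.

(* Averaging never leaves the initial range. *)
Definition bound := \sum_i `|z 0%N i|.

Lemma bound_ge0 : 0 <= bound.
Proof. exact: sumr_ge0. Qed.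

Lemma z_bound t i : `|z t i| <= bound.
Proof.
elim: t i => [|t IH] i.
  rewrite /bound (bigD1 i) //=.
  have : 0 <= \sum_(j | j != i) `|z 0%N j| by apply: sumr_ge0.
  lra.
rewrite hz /Az; apply: le_trans (ler_norm_sum _ _ _) _.
apply: le_trans (_ : \sum_j a t i j * bound <= _); last by rewrite -mulr_suml ha1 mul1r.
apply: ler_sum => j _; rewrite normrM ger0_norm //; exact: ler_wpM2l.
Qed.

Lemma Phi_mono b t : 0 < b -> b <= b0 -> Phi b (z t.+1) <= Phi b (z t).
Proof.
move=> hb /(b_ok hb) [h1 h2 _]; rewrite hz.
exact: (Phi_dec (ha0 t) (ha1 t) (hdiag t) (hsym t) hb h1 h2 hc1).
Qed.

Definition Psi k b t := \sum_(l < N - k) b ^+ l * sorted_val (z t) (k + l).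

Lemma Psi0 b t : Psi 0 b t = Phi b (z t).
Proof. by rewrite /Psi subn0 Phi_sorted. Qed.

Lemma Psi_rec k b t : (k < N)%N -> Psi k b t = sorted_val (z t) k + b * Psi k.+1 b t.
Proof.
move=> hk; rewrite /Psi.
have -> : (N - k = (N - k.+1).+1)%N by rewrite subnS prednK // subn_gt0.
rewrite big_ord_recl /= expr0 mul1r addn0 mulr_sumr; congr (_ + _).
by apply: eq_bigr => l _; rewrite /bump /= addnS addSn exprS; ring.
Qed.

Lemma Psi_bound k b t : 0 < b -> b <= 1/4 -> `|Psi k b t| <= 4/3 * bound.
Proof.
move=> hb hb1; apply: le_trans (ler_norm_sum _ _ _) _.
apply: le_trans (_ : \sum_(l < N - k) b ^+ l * bound <= _).
  apply: ler_sum => l _; rewrite normrM ger0_norm; last exact: (geom_ge0 hb).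
  by apply: ler_wpM2l; [exact: (geom_ge0 hb) | exact: z_bound].
rewrite -mulr_suml; have := geom_sum b (N - k); have := geom_ge0 hb (N - k).
have := bound_ge0; have := geom_sum_ge0 hb (N - k); nra.
Qed.

(* Phi b (z t), a bounded nonincreasing sequence, converges. *)
Lemma Psi0_cvg b : 0 < b -> b <= b0 -> exists L, cvg (Psi 0 b) L.
Proof.
move=> hb hb'; have [_ _ hb1] := b_ok hb hb'.
apply: (@dec_cvg _ (- (4/3 * bound))) => t; first by rewrite !Psi0; exact: Phi_mono.
by have := Psi_bound 0 t hb hb1; rewrite ler_norml => /andP [].
Qed.

(* The k-th sorted value oscillates at most as much as Psi k b, up to
   the small error contributed by b * Psi k.+1 b. *)
Lemma sorted_val_osc k b t s : (k < N)%N -> 0 < b -> b <= 1/4 ->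
  `|sorted_val (z t) k - sorted_val (z s) k| <=
  `|Psi k b t - Psi k b s| + b * (8/3 * bound).
Proof.
move=> hk hb hb1; rewrite (Psi_rec b t hk) (Psi_rec b s hk).
have := Psi_bound k.+1 t hb hb1; have := Psi_bound k.+1 s hb hb1.
set Pt := Psi _ _ t; set Ps := Psi _ _ s => hs ht.
have hP : `|b * Pt - b * Ps| <= b * (8/3 * bound).
  rewrite -mulrBr normrM (ger0_norm (ltW hb)); apply: ler_wpM2l; first exact: ltW.
  by apply: le_trans (ler_normB _ _) _; lra.
have := ler_normB (sorted_val (z t) k + b * Pt - (sorted_val (z s) k + b * Ps))
                  (b * Pt - b * Ps).
have -> : sorted_val (z t) k + b * Pt - (sorted_val (z s) k + b * Ps) - (b * Pt - b * Ps)
  = sorted_val (z t) k - sorted_val (z s) k by ring.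
lra.
Qed.

(* If the tails from rank k converge for all small b, the k-th sorted
   value is a Cauchy sequence: choose b small against the oscillation. *)
Lemma sorted_val_cvg_step k : (k < N)%N ->
  (forall b, 0 < b -> b <= b0 -> exists L, cvg (Psi k b) L) ->
  exists Y, cvg (fun t => sorted_val (z t) k) Y.
Proof.
move=> hk hP; apply: cauchy_cvg => eps he.
have hB := bound_ge0.
have hD : 0 < 6 * (bound + 1) by lra.
set b := Num.min b0 (eps / (6 * (bound + 1))).
have hb : 0 < b by rewrite lt_min b0_gt0 divr_gt0.
have hbb0 : b <= b0 by rewrite ge_min lexx.
have hbe : b * (6 * (bound + 1)) <= eps by rewrite -ler_pdivlMr // ge_min lexx orbT.
have [_ _ hb1] := b_ok hb hbb0.
have [L hL] := hP b hb hbb0.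
have [T hT] := hL _ (divr_gt0 he (ltr0n _ 4)).
exists T => t s ht hs; apply: le_lt_trans (sorted_val_osc t s hk hb hb1) _.
have := hT t ht; have := hT s hs.
have := ler_normB (Psi k b t - L) (Psi k b s - L).
have -> : Psi k b t - L - (Psi k b s - L) = Psi k b t - Psi k b s by ring.
nra.
Qed.

Lemma Psi_cvg_step k : (k < N)%N ->
  (forall b, 0 < b -> b <= b0 -> exists L, cvg (Psi k b) L) ->
  forall b, 0 < b -> b <= b0 -> exists L, cvg (Psi k.+1 b) L.
Proof.
move=> hk hP b hb hb'.
have [Y hY] := sorted_val_cvg_step hk hP; have [L hL] := hP b hb hb'.
exists (b^-1 * L + (- b^-1) * Y).
apply: (cvg_ext (u := fun t => b^-1 * Psi k b t + (- b^-1) * sorted_val (z t) k)).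
  by move=> t; rewrite (Psi_rec b t hk); field; rewrite gt_eqF.
exact: cvg_lin.
Qed.

Lemma sorted_val_cvg k : (k < N)%N -> exists Y, cvg (fun t => sorted_val (z t) k) Y.
Proof.
move=> hk; apply: sorted_val_cvg_step => //.
elim: k hk => [|k IH] hk; first exact: Psi0_cvg.
by apply: Psi_cvg_step; [exact: ltnW | apply: IH; exact: ltnW].
Qed.

Lemma sorted_limits :
  exists Y : nat -> R, forall k, (k < N)%N -> cvg (fun t => sorted_val (z t) k) (Y k).
Proof.
apply: (@functional_choice nat R
  (fun k Y => (k < N)%N -> cvg (fun t => sorted_val (z t) k) Y)) => k.
case: (ltnP k N) => [/sorted_val_cvg [Y hY] | hk]; first by exists Y.
by exists 0.
Qed.

Lemma Phi_steps_small eps : 0 < eps ->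
  exists T, forall t, (T <= t)%N -> Phi b0 (z t) - Phi b0 (z t.+1) < eps.
Proof.
move=> he; have [L hL] := Psi0_cvg b0_gt0 (lexx _).
have [T hT] := hL _ (divr_gt0 he (ltr0n _ 2)).
exists T => t ht; have := hT t ht; have := hT t.+1 (leqW ht).
by rewrite !Psi0 !ltr_norml => /andP [? ?] /andP [? ?]; lra.
Qed.

Lemma upper_freeze (Y : nat -> R) m : (m < n)%N ->
  cvg (fun t => sorted_val (z t) m) (Y m) ->
  cvg (fun t => sorted_val (z t) m.+1) (Y m.+1) -> Y m.+1 < Y m ->
  exists T, forall t, (T <= t)%N -> upper (z t.+1) m.+1 = upper (z t) m.+1.
Proof.
move=> hm h1 h2 hY; set g := Y m - Y m.+1.
have hg : 0 < g by rewrite /g; lra.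
have [hbK hbc _] := b_ok b0_gt0 (lexx _).
have hkap : 0 < kappa N c b0.
  by apply: mulr_gt0; [have := hc0; lra | apply: exprn_gt0; exact: b0_gt0].
have [T1 hT1] := Phi_steps_small (divr_gt0 (mulr_gt0 hkap hg) (ltr0n _ 2)).
have [T2 hT2] := h1 _ (divr_gt0 hg (ltr0n _ 4)).
have [T3 hT3] := h2 _ (divr_gt0 hg (ltr0n _ 4)).
exists (maxn T1 (maxn T2 T3)) => t; rewrite !geq_max => /and3P [/hT1 ht1 /hT2 ht2 /hT3 ht3].
apply/eqP; apply/negPn/negP; rewrite hz => hne.
have := Phi_drop (ha0 t) (ha1 t) (hdiag t) (hsym t) b0_gt0 hbK hbc hc1 hm hne.
rewrite -hz; move: ht1 ht2 ht3; rewrite /g !ltr_norml.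
set y1 := sorted_val _ m; set y2 := sorted_val _ m.+1 => ht1 /andP [? ?] /andP [? ?] hd.
have : kappa N c b0 * ((Y m - Y m.+1) / 2) <= kappa N c b0 * (y1 - y2).
  by apply: ler_wpM2l; [exact: ltW | lra].
lra.
Qed.

Lemma gap_between (Y : nat -> R) k k' :
  (k < k')%N -> Y k' < Y k -> exists m, [/\ (k <= m)%N, (m < k')%N & Y m.+1 < Y m].
Proof.
elim: k' => // k' IH hk hY.
case: (ltP (Y k'.+1) (Y k')) => h; first by exists k'.
have hY' : Y k' < Y k by apply: le_lt_trans h hY.
have hk' : (k < k')%N.
  by move: hk; rewrite ltnS leq_eqVlt => /orP [/eqP e | //]; rewrite e ltxx in hY'.
by have [m [h1 h2 h3]] := IH hk' hY'; exists m; split => //; apply: ltnW.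
Qed.

Lemma level_le (Y : nat -> R) (z1 z2 : 'I_N -> R) i :
  (forall k k', (k <= k')%N -> (k' < N)%N -> Y k' <= Y k) ->
  (forall m, (m < n)%N -> Y m.+1 < Y m -> upper z2 m.+1 = upper z1 m.+1) ->
  Y (rank_perm z1 i) <= Y (rank_perm z2 i).
Proof.
move=> hmono hup; rewrite leNgt; apply/negP => hlt.
have hk : (rank_perm z1 i < rank_perm z2 i)%N.
  by rewrite ltnNge; apply/negP => /hmono /(_ (ltn_ord _)); rewrite leNgt hlt.
have [m [h1 h2 h3]] := gap_between hk hlt.
have hm : (m < n)%N by rewrite -ltnS; exact: leq_ltn_trans h2 (ltn_ord _).
by move: (hup m hm h3) => /setP /(_ i); rewrite !inE !ltnS h1 leqNgt h2.
Qed.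

(* Main result on averaging dynamics: each index eventually keeps the
   limit level lvl of its rank, and its value converges to that level. *)
Theorem dynamics_cvg i : exists L, cvg (fun t => z t i) L.
Proof.
have [Y hY] := sorted_limits.
have hmono k k' : (k <= k')%N -> (k' < N)%N -> Y k' <= Y k.
  move=> hk hk'; apply: (cvg_le (u := fun t => sorted_val (z t) k')) (hY _ hk') (hY _ _).
    by move=> t; apply: sorted_val_mono.
  exact: leq_ltn_trans hk hk'.
have [T1 hT1] : exists T, forall t, (T <= t)%N -> forall m, (m < n)%N ->
    Y m.+1 < Y m -> upper (z t.+1) m.+1 = upper (z t) m.+1.
  apply: (eventually_all (P := fun m t => Y m.+1 < Y m -> upper _ m.+1 = _)) => m hm.
  case: (ltP (Y m.+1) (Y m)) => hgap; last by exists 0%N.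
  have [T hT] := upper_freeze hm (hY m (ltn_trans hm (ltnSn n))) (hY m.+1 hm) hgap.
  by exists T => t ht _; apply: hT.
pose lvl t := Y (rank_perm (z t) i).
have hlvl t : (T1 <= t)%N -> lvl t = lvl T1.
  elim: t => [|t IH]; first by rewrite leqn0 => /eqP ->.
  rewrite leq_eqVlt => /orP [/eqP <- // | ht]; rewrite -IH // /lvl.
  have hup := hT1 t ht.
  apply/eqP; rewrite eq_le; apply/andP; split;
    by apply: level_le => // m hm hgap; rewrite hup.
exists (lvl T1) => eps he.
have [T2 hT2] := eventually_all (P := fun k t => `|sorted_val (z t) k - Y k| < eps)
  (fun k hk => hY k hk eps he).
exists (maxn T1 T2) => t; rewrite geq_max => /andP [ht1 ht2].
by rewrite sorted_val_rank -(hlvl t ht1) /lvl; apply: hT2.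
Qed.

End Dynamics.

Definition hull p M (X : nat -> vec) (y : vec) :=
  exists lam : nat -> R, [/\ forall j, (j < M)%N -> 0 <= lam j,
    \sum_(j < M) lam j = 1 &
    forall k, (k < p)%N -> y k = \sum_(j < M) lam j * X j k].

Lemma sum_toE M (g : nat -> R) : sum_to M g = \sum_(j < M) g j.
Proof. by elim: M => [|M IH] /=; rewrite ?big_ord0 // big_ord_recr /= IH. Qed.

Lemma in_hullE p M X y : in_hull p M X y <-> hull p M X y.
Proof.
split=> -[lam].
  move=> [h1 [h2 h3]]; exists lam; split.
  - by move=> j /ssrnat.ltP /h1 /RleP.
  - by rewrite -sum_toE.
  - by move=> k /ssrnat.ltP /h3 ->; rewrite sum_toE.
move=> [h1 h2 h3]; exists lam; split; [|split].
- by move=> j /ssrnat.ltP /h1 /RleP.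
- by rewrite sum_toE.
- by move=> k /ssrnat.ltP /h3 ->; rewrite sum_toE.
Qed.

Lemma hull_ext p M X (y v : vec) :
  (forall k, (k < p)%N -> v k = y k) -> hull p M X y -> hull p M X v.
Proof. by move=> h [lam [h1 h2 h3]]; exists lam; split => // k hk; rewrite h // h3. Qed.

Lemma hull_nonempty p M X y : hull p M X y -> (0 < M)%N.
Proof.
by case: M => // -[lam [_ + _]]; rewrite big_ord0 => /esym/eqP; rewrite oner_eq0.
Qed.

Lemma hull_pt p M X j : (j < M)%N -> hull p M X (X j).
Proof.
move=> hj; exists (fun i => (i == j)%:R); split.
- by move=> i _; rewrite ler0n.
- rewrite (bigD1 (Ordinal hj)) //= eqxx big1 ?addr0 // => i hi.
  by rewrite (_ : (i == j :> nat) = false) // -[j]/(val (Ordinal hj)); apply/negbTE.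
- move=> k _; rewrite (bigD1 (Ordinal hj)) //= eqxx mul1r big1 ?addr0 // => i hi.
  by rewrite (_ : (i == j :> nat) = false) ?mul0r // -[j]/(val (Ordinal hj)); apply/negbTE.
Qed.

Lemma weight_le1 M (lam : nat -> R) j : (forall i, (i < M)%N -> 0 <= lam i) ->
  \sum_(i < M) lam i = 1 -> (j < M)%N -> lam j <= 1.
Proof.
move=> h1 h2 hj; rewrite -h2 (bigD1 (Ordinal hj)) //= lerDl.
by apply: sumr_ge0 => i _; apply: h1.
Qed.

Lemma hull_trans p M M' (Y X : nat -> vec) y :
  hull p M Y y -> (forall i, (i < M)%N -> hull p M' X (Y i)) -> hull p M' X y.
Proof.
move=> [lam [h1 h2 h3]] hY.
have [Lam hL] : exists Lam : nat -> nat -> R, forall i, (i < M)%N ->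
    [/\ forall j, (j < M')%N -> 0 <= Lam i j, \sum_(j < M') Lam i j = 1 &
        forall k, (k < p)%N -> Y i k = \sum_(j < M') Lam i j * X j k].
  apply: (functional_choice (fun i (L : nat -> R) => (i < M)%N ->
    [/\ forall j, (j < M')%N -> 0 <= L j, \sum_(j < M') L j = 1 &
        forall k, (k < p)%N -> Y i k = \sum_(j < M') L j * X j k])) => i.
  by case: (ltnP i M) => [/hY [L hL] | _]; [exists L | exists (fun _ => 0)].
exists (fun j => \sum_(i < M) lam i * Lam i j); split.
- move=> j hj; apply: sumr_ge0 => i _.
  by have [+ _ _] := hL i (ltn_ord i) => /(_ j hj); apply: mulr_ge0; apply: h1.
- rewrite exchange_big /= -h2; apply: eq_bigr => i _.
  by have [_ + _] := hL i (ltn_ord i); rewrite -mulr_sumr => ->; rewrite mulr1.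
- move=> k hk; rewrite h3 //; under [RHS]eq_bigr do rewrite mulr_suml.
  rewrite [RHS]exchange_big /=; apply: eq_bigr => i _.
  have [_ _ ->] := hL i (ltn_ord i) => //.
  by rewrite mulr_sumr; apply: eq_bigr => j _; rewrite mulrA.
Qed.

Lemma hull_peel p M (X : nat -> vec) (lam : nat -> R) (y : vec) :
  (forall j, (j < M.+1)%N -> 0 <= lam j) -> \sum_(j < M.+1) lam j = 1 ->
  (forall k, (k < p)%N -> y k = \sum_(j < M.+1) lam j * X j k) -> lam M < 1 ->
  hull p M X (fun k => (y k - lam M * X M k) / (1 - lam M)).
Proof.
move=> h1 h2 h3 hlt; rewrite big_ord_recr /= in h2.
have hne : 1 - lam M != 0 by rewrite subr_eq0 eq_sym lt_eqF.
exists (fun j => lam j / (1 - lam M)); split.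
- by move=> j hj; apply: divr_ge0; [apply: h1; exact: leqW hj | lra].
- by rewrite -mulr_suml (_ : \sum_(j < M) lam j = 1 - lam M) ?mulfV //; lra.
- move=> k hk; rewrite h3 // big_ord_recr /= addrK mulr_suml.
  by apply: eq_bigr => j _; rewrite mulrAC.
Qed.

Lemma hull_cons p M (X : nat -> vec) (L : R) (w : vec) : 0 <= L <= 1 -> hull p M X w ->
  hull p M.+1 X (fun k => L * X M k + (1 - L) * w k).
Proof.
move=> /andP [hL0 hL1] [mu [h1 h2 h3]].
exists (fun j => if (j < M)%N then (1 - L) * mu j else L); split.
- move=> j _; case: ifP => // /h1; apply: mulr_ge0; lra.
- rewrite big_ord_recr /= ltnn (eq_bigr (fun j : 'I_M => (1 - L) * mu j)).
    by rewrite -mulr_sumr h2; ring.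
  by move=> j _; rewrite ltn_ord.
- move=> k hk; rewrite big_ord_recr /= ltnn h3 // mulr_sumr addrC.
  by congr (_ + _); apply: eq_bigr => j _; rewrite ltn_ord mulrA.
Qed.

Lemma hull_near_last M (X : nat -> vec) (lam : nat -> R) (y : vec) k :
  (forall j, (j < M.+1)%N -> 0 <= lam j) -> \sum_(j < M.+1) lam j = 1 ->
  y k = \sum_(j < M.+1) lam j * X j k ->
  `|y k - X M k| <= (1 - lam M) * \sum_(j < M) `|X j k - X M k|.
Proof.
move=> h1 h2 ->; rewrite big_ord_recr /= in h2.
have -> : \sum_(j < M.+1) lam j * X j k - X M k =
    \sum_(j < M) lam j * (X j k - X M k).
  have hs : \sum_(j < M) lam j = 1 - lam M by lra.
  rewrite big_ord_recr /=; under [RHS]eq_bigr do rewrite mulrBr.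
  by rewrite sumrB -mulr_suml hs; ring.
apply: le_trans (ler_norm_sum _ _ _) _.
rewrite (_ : 1 - lam M = \sum_(j < M) lam j); last by lra.
rewrite mulr_suml; apply: ler_sum => j _.
rewrite normrM ger0_norm; last by apply: h1; exact: leqW (ltn_ord j).
apply: ler_wpM2l; first by apply: h1; exact: leqW (ltn_ord j).
rewrite (bigD1 j) //=; have : 0 <= \sum_(i < M | i != j) `|X i k - X M k| by apply: sumr_ge0.
lra.
Qed.

(* The hull of finitely many points contains the cluster points of
   its sequences; the proof is by induction on the number of points,
   following a cluster value L of the weight put on the last point X M. *)
Definition cluster p (Z : nat -> vec) (v : vec) :=
  forall eps : R, 0 < eps -> forall T, exists t, (T <= t)%N /\
    forall k, (k < p)%N -> `|Z t k - v k| < eps.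

Lemma cvg_cluster p (Z : nat -> vec) (v : vec) :
  (forall k, (k < p)%N -> cvg (fun t => Z t k) (v k)) -> cluster p Z v.
Proof.
move=> h eps he T.
have [T0 hT0] := eventually_all (P := fun k t => `|Z t k - v k| < eps) (fun k hk => h k hk eps he).
by exists (maxn T T0); split; [exact: leq_maxl | apply: hT0; exact: leq_maxr].
Qed.

(* Bolzano-Weierstrass on [0, 1]: the supremum of the values exceeded
   infinitely often is a cluster value. *)
Lemma cluster_value01 (s : nat -> R) : (forall t, 0 <= s t <= 1) ->
  exists L, 0 <= L <= 1 /\
    forall eps, 0 < eps -> forall T, exists t, (T <= t)%N /\ `|s t - L| < eps.
Proof.
move=> hs.
pose E x := forall T, exists t, (T <= t)%N /\ x <= s t.
have E0 : E 0 by move=> T; exists T; have /andP [] := hs T.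
have [L [hub hlub]] : {L | is_lub E L}.
  apply: completeness; last by exists 0.
  by exists 1 => x /(_ 0%N) [t [_ hx]]; apply/RleP; have /andP [_ ?] := hs t; lra.
have L1 : L <= 1.
  by apply/RleP; apply: hlub => x /(_ 0%N) [t [_ hx]]; apply/RleP; have /andP [_ ?] := hs t; lra.
exists L; split; first by apply/andP; split => //; apply/RleP; apply: hub.
move=> eps he T.
have [x [hx hxL]] : exists x, E x /\ L - eps / 2 < x.
  apply: NNPP => hn; suff /RleP : Rle L (L - eps / 2)%R by lra.
  apply: hlub => y hy; apply/RleP; rewrite leNgt; apply/negP => hlt.
  by apply: hn; exists y.
have [T0 hT0] : exists T0, forall t, (T0 <= t)%N -> s t < L + eps / 2.
  apply: NNPP => hn; suff /RleP : Rle (L + eps / 2)%R L by lra.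
  apply: hub => T1; apply: NNPP => hn2; apply: hn; exists T1 => t ht.
  by rewrite ltNge; apply/negP => hle; apply: hn2; exists t.
have [t [ht hxt]] := hx (maxn T T0); move: ht; rewrite geq_max => /andP [htT /hT0 hup].
by exists t; split => //; rewrite ltr_norml; apply/andP; split; lra.
Qed.

Lemma cluster_joint p (Z : nat -> vec) (v : vec) (s : nat -> R) :
  cluster p Z v -> (forall t, 0 <= s t <= 1) ->
  exists L, 0 <= L <= 1 /\ forall d : R, 0 < d -> forall T, exists t, (T <= t)%N /\
    `|s t - L| < d /\ forall k, (k < p)%N -> `|Z t k - v k| < d.
Proof.
move=> hc hs.
have [phi hphi] : exists phi : nat -> nat, forall m, (m <= phi m)%N /\
    forall k, (k < p)%N -> `|Z (phi m) k - v k| < (m.+1)%:R^-1.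
  apply: (functional_choice (fun m t => (m <= t)%N /\
    forall k, (k < p)%N -> `|Z t k - v k| < (m.+1)%:R^-1)) => m.
  by apply: hc; rewrite invr_gt0 ltr0n.
have [L [hL01 hL]] := cluster_value01 (fun m => hs (phi m)).
exists L; split => // d hd T.
have [m0 hm0] : exists m0 : nat, d^-1 < m0%:R.
  by exists (Num.Def.archi_bound d^-1); apply: archi_boundP; rewrite invr_ge0 ltW.
have [m [hm hsm]] := hL d hd (maxn T m0); move: hm; rewrite geq_max => /andP [hTm hm0m].
have [hphim hZm] := hphi m.
exists (phi m); split; first exact: leq_trans hTm hphim.
split => // k hk; apply: lt_le_trans (hZm k hk) _.
have hm1 : d^-1 <= (m.+1)%:R by apply/ltW/(lt_le_trans hm0); rewrite ler_nat leqW.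
by rewrite -[d]invrK lef_pV2 // posrE ?ltr0n ?invr_gt0.
Qed.

Lemma peel_estimate (A V x s L dl Q eps : R) :
  0 < 1 - L -> 1 - L <= 1 -> `|A - V| < dl -> `|s - L| < dl -> `|V - x| <= Q -> 0 <= Q ->
  dl <= (1 - L) / 2 -> dl * (4 * (1 + Q)) <= eps * ((1 - L) * (1 - L)) -> 0 < eps ->
  `|(A - s * x) / (1 - s) - (V - L * x) / (1 - L)| < eps.
Proof.
move=> hu hu1 h1 h2 h3 hQ h4 h5 he.
have hs : (1 - L) / 2 <= 1 - s by move: h2; rewrite ltr_norml => /andP [? ?]; lra.
have hd : 0 < (1 - s) * (1 - L) by apply: mulr_gt0 => //; lra.
have -> : (A - s * x) / (1 - s) - (V - L * x) / (1 - L) =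
    ((A - V) * (1 - L) + (V - x) * (s - L)) / ((1 - s) * (1 - L)).
  by field; apply/andP; split; rewrite gt_eqF //; lra.
rewrite normrM normfV (gtr0_norm hd) ltr_pdivrMr //.
have hn : `|(A - V) * (1 - L) + (V - x) * (s - L)| <= dl * (1 - L) + Q * dl.
  apply: le_trans (ler_normD _ _) _; rewrite !normrM (gtr0_norm hu).
  have : `|V - x| * `|s - L| <= Q * dl by apply: ler_pM => //; exact: ltW.
  have : `|A - V| * (1 - L) <= dl * (1 - L) by apply: ler_wpM2r; [lra | exact: ltW].
  lra.
have hdl0 : 0 <= dl by have := normr_ge0 (A - V); lra.
have : dl * (1 - L) + Q * dl <= dl * (1 + Q) by nra.
have : eps * ((1 - L) * (1 - L) / 2) <= eps * ((1 - s) * (1 - L)).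
  by apply: ler_wpM2l; [exact: ltW | nra].
have : 0 < eps * ((1 - L) * (1 - L)) by apply: mulr_gt0 => //; nra.
lra.
Qed.

Lemma small_norm_eq0 (a Q : R) : 0 <= Q ->
  (forall d, 0 < d -> `|a| <= d * (1 + Q)) -> a = 0.
Proof.
move=> hQ h; apply/normr0_eq0/le_anti; rewrite normr_ge0 andbT.
rewrite leNgt; apply/negP => ha.
have hD : 0 < 2 * (1 + Q) by lra.
have := h _ (divr_gt0 ha hD).
have : `|a| / (2 * (1 + Q)) * (2 * (1 + Q)) = `|a| by rewrite divfK // gt_eqF.
lra.
Qed.

Section HullClosedStep.
Variables (p M : nat) (X : nat -> vec) (Z : nat -> vec) (v : vec).
Variables (lam : nat -> nat -> R) (L : R).
Hypothesis hlam : forall t, [/\ forall j, (j < M.+1)%N -> 0 <= lam t j,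
  \sum_(j < M.+1) lam t j = 1 &
  forall k, (k < p)%N -> Z t k = \sum_(j < M.+1) lam t j * X j k].
Hypothesis hL01 : 0 <= L <= 1.
Hypothesis hjoint : forall d : R, 0 < d -> forall T, exists t, (T <= t)%N /\
  `|lam t M - L| < d /\ forall k, (k < p)%N -> `|Z t k - v k| < d.

Lemma closed_at_vertex : L = 1 -> forall k, (k < p)%N -> v k = X M k.
Proof.
move=> hL1 k hk; apply/eqP; rewrite -subr_eq0; apply/eqP.
have hQ : 0 <= \sum_(j < M) `|X j k - X M k| by apply: sumr_ge0.
apply: (small_norm_eq0 hQ) => d hd; have [t [_ [hs /(_ k hk) hZ]]] := hjoint hd 0%N.
have [h1 h2 h3] := hlam t.
have hn := hull_near_last h1 h2 (h3 k hk).
have := ler_distD (Z t k) (v k) (X M k); rewrite distrC in hZ.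
move: hn hs; rewrite hL1 ltr_norml => hn /andP [hs _].
nra.
Qed.

(* Otherwise the points peeled off X M cluster at a point of the hull of
   X 0 .. X (M-1), from which v is recovered. *)
Lemma closed_peeled :
  (forall Z' w, (forall t, hull p M X (Z' t)) -> cluster p Z' w -> hull p M X w) ->
  L < 1 -> hull p M.+1 X v.
Proof.
move=> IH hLlt; have hu : 0 < 1 - L by lra.
have [t0 [_ [hs0 _]]] := hjoint (divr_gt0 hu (ltr0n _ 2)) 0%N.
have hs0' : lam t0 M < 1 by move: hs0; rewrite ltr_norml => /andP [_ ?]; lra.
pose peel t k := (Z t k - lam t M * X M k) / (1 - lam t M).
pose W t := if lam t M < 1 then peel t else peel t0.
have hW t : hull p M X (W t).
  rewrite /W; case: ifP => hst.
    by have [h1 h2 h3] := hlam t; apply: hull_peel.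
  by have [h1 h2 h3] := hlam t0; apply: hull_peel.
pose w k := (v k - L * X M k) / (1 - L).
have hcW : cluster p W w.
  move=> eps he T; set Q := \sum_(k < p) `|v k - X M k|.
  have hQ : 0 <= Q by apply: sumr_ge0.
  pose dl := Num.min ((1 - L) / 2) (eps * ((1 - L) * (1 - L)) / (4 * (1 + Q))).
  have hdl : 0 < dl.
    by rewrite lt_min; apply/andP; split; [lra | apply: divr_gt0; [apply: mulr_gt0 => //; nra | lra]].
  have hdl1 : dl <= (1 - L) / 2 by rewrite ge_min lexx.
  have hdl2 : dl * (4 * (1 + Q)) <= eps * ((1 - L) * (1 - L)).
    by rewrite -ler_pdivlMr ?ge_min ?lexx ?orbT //; lra.
  have [t [ht [h1 h2]]] := hjoint hdl T.
  exists t; split => // k hk.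
  have hst : lam t M < 1 by move: h1; rewrite ltr_norml => /andP [_ ?]; lra.
  have hQk : `|v k - X M k| <= Q.
    rewrite /Q (bigD1 (Ordinal hk)) //= lerDl; exact: sumr_ge0.
  rewrite /W hst; apply: peel_estimate hu _ (h2 k hk) h1 hQk hQ hdl1 hdl2 he.
  by move: hL01 => /andP [? _]; lra.
apply: hull_ext (hull_cons hL01 (IH W w hW hcW)) => k hk.
by rewrite /w; field; rewrite gt_eqF.
Qed.

End HullClosedStep.

Lemma hull_closed p M X Z v :
  (forall t, hull p M X (Z t)) -> cluster p Z v -> hull p M X v.
Proof.
elim: M Z v => [|M IH] Z v hZ hc; first by have := hull_nonempty (hZ 0%N).
have [lam hlam] : exists lam : nat -> nat -> R, forall t,
    [/\ forall j, (j < M.+1)%N -> 0 <= lam t j, \sum_(j < M.+1) lam t j = 1 &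
        forall k, (k < p)%N -> Z t k = \sum_(j < M.+1) lam t j * X j k].
  exact: (functional_choice (fun t (l : nat -> R) =>
    [/\ forall j, (j < M.+1)%N -> 0 <= l j, \sum_(j < M.+1) l j = 1 &
        forall k, (k < p)%N -> Z t k = \sum_(j < M.+1) l j * X j k]) hZ).
have hs t : 0 <= lam t M <= 1.
  by have [h1 h2 _] := hlam t; rewrite h1 // (weight_le1 h1 h2).
have [L [hL01 hjoint]] := cluster_joint hc hs.
case: (ltgtP L 1) => [hlt | hgt | heq].
- exact: closed_peeled hlam hL01 hjoint IH hlt.
- by move: hL01 => /andP [_]; rewrite leNgt hgt.
- by apply: hull_ext (hull_pt _ _ (ltnSn M)); apply: closed_at_vertex hlam hjoint heq.
Qed.

(* For positive weights and a
   PDD kernel, every coordinate of the iteration is z (t+1) = Az (a t) (z t)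
   with a t i j = f(x_i - x_j) w_j / D_t i.  These matrices are stochastic,
   their diagonal is at least c = min w / sum w (since f(0) = 1), and
   a t i j <= K * a t j i with K = (sum w / min w)^2 (since f is
   symmetric); so Dynamics applies. *)

Fixpoint min_weight (w : nat -> R) (m : nat) : R :=
  if m is m'.+1 then Num.min (min_weight w m') (w m) else w 0%N.

Lemma min_weight_le w m i : (i <= m)%N -> min_weight w m <= w i.
Proof.
elim: m => [|m IH] /=; first by rewrite leqn0 => /eqP ->.
by rewrite leq_eqVlt ge_min => /orP [/eqP -> | /IH ->]; rewrite ?lexx ?orbT.
Qed.

Lemma min_weight_gt0 w m : (forall i, (i <= m)%N -> 0 < w i) -> 0 < min_weight w m.
Proof.
elim: m => [|m IH] /= h; first exact: h.
by rewrite lt_min IH ?h // => i hi; apply: h; apply: leqW.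
Qed.

Lemma vnorm_sym p u v : vnorm p (vsub u v) = vnorm p (vsub v u).
Proof.
rewrite /vnorm; congr sqrt; elim: p => //= p ->; congr (_ + _).
by rewrite /vsub !RminusE !RmultE; ring.
Qed.

Lemma kernel_ratio (F wi wj Di Dj wm Wt : R) :
  0 <= F -> 0 < wm -> wm <= wi -> wi <= Di -> wm <= wj -> wj <= Dj ->
  wj <= Wt -> Dj <= Wt ->
  F * wj / Di <= Wt * Wt / (wm * wm) * (F * wi / Dj).
Proof.
move=> hF hm hwi hDi hwj hDj hWj hWD.
have hDi0 : 0 < Di by lra.
have hDj0 : 0 < Dj by lra.
set K := Wt * Wt / (wm * wm).
have hK : 0 <= K by apply: divr_ge0; nra.
have eK : K * (wm * wm) = Wt * Wt by rewrite divfK // gt_eqF ?mulr_gt0.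
have -> : F * wj / Di = F * (wj * Dj) / (Di * Dj) by field; rewrite !gt_eqF.
have -> : K * (F * wi / Dj) = K * (F * (wi * Di)) / (Di * Dj) by field; rewrite !gt_eqF.
rewrite ler_pM2r ?invr_gt0 ?mulr_gt0 //.
have h1 : F * (wj * Dj) <= F * (Wt * Wt) by apply: ler_wpM2l => //; nra.
have h2 : K * (F * (wm * wm)) <= K * (F * (wi * Di)).
  by apply: ler_wpM2l => //; apply: ler_wpM2l => //; nra.
have : K * (F * (wm * wm)) = F * (Wt * Wt) by rewrite -eK; ring.
lra.
Qed.

Section MeanShift.
Variables (p n : nat) (phi : R -> R) (w : nat -> R) (x : nat -> vec).
Local Notation N := n.+1.
Hypothesis Hw : forall j, (j < N)%N -> 0 < w j.
Hypothesis Hf : PDD p phi.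

Definition X t := bms p N phi w x t.

Definition kw t i j := kern p phi (vsub (X t i) (X t j)).

Lemma kw01 t i j : 0 <= kw t i j <= 1.
Proof.
have [h01 _] := Hf; have hr : Rle 0 (vnorm p (vsub (X t i) (X t j))) := sqrt_pos _.
by have [/RleP ? /RleP ?] := h01 _ hr; apply/andP.
Qed.

Lemma kw_ii t i : kw t i i = 1.
Proof. by have [_ [_ hiff]] := Hf; apply/hiff => k _; rewrite /vsub RminusE subrr. Qed.

Lemma kw_sym t i j : kw t i j = kw t j i.
Proof. by rewrite /kw /kern vnorm_sym. Qed.

Definition denom t (i : nat) := \sum_(j < N) kw t i j * w j.
Definition wsum := \sum_(j < N) w j.
Definition wmin := min_weight w n.

Lemma wmin_gt0 : 0 < wmin.
Proof. by apply: min_weight_gt0 => i hi; apply: Hw. Qed.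

Lemma wmin_le (i : 'I_N) : wmin <= w i.
Proof. by apply: min_weight_le; rewrite -ltnS. Qed.

Lemma w_le_denom t (i : 'I_N) : w i <= denom t i.
Proof.
rewrite /denom (bigD1 i) //= kw_ii mul1r lerDl; apply: sumr_ge0 => j _.
by apply: mulr_ge0; [have /andP [] := kw01 t i j | apply/ltW/Hw].
Qed.

Lemma denom_le t i : denom t i <= wsum.
Proof.
apply: ler_sum => j _; have /andP [? ?] := kw01 t i j; have := Hw (ltn_ord j); nra.
Qed.

Lemma denom_gt0 t (i : 'I_N) : 0 < denom t i.
Proof. exact: lt_le_trans (Hw (ltn_ord i)) (w_le_denom t i). Qed.

Definition am t (i j : 'I_N) := kw t i j * w j / denom t i.
Definition c_ms := wmin / wsum.
Definition K_ms := wsum * wsum / (wmin * wmin).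

Lemma am0 t i j : 0 <= am t i j.
Proof.
apply: divr_ge0; last exact: ltW (denom_gt0 t i).
by apply: mulr_ge0; [have /andP [] := kw01 t i j | apply/ltW/Hw].
Qed.

Lemma am1 t i : \sum_j am t i j = 1.
Proof. by rewrite -mulr_suml mulfV // gt_eqF // denom_gt0. Qed.

Lemma am_diag t i : c_ms <= am t i i.
Proof.
rewrite /am kw_ii mul1r /c_ms.
have := denom_gt0 t i; have := denom_le t i; have := wmin_le i; have := wmin_gt0 => *.
rewrite ler_pdivrMr ?(lt_le_trans (denom_gt0 t i) (denom_le t i)) //.
rewrite mulrAC ler_pdivlMr //; nra.
Qed.

Lemma am_sym t i j : am t i j <= K_ms * am t j i.
Proof.
rewrite /am kw_sym; apply: kernel_ratio; rewrite ?wmin_le ?w_le_denom ?denom_le //.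
- by have /andP [] := kw01 t j i.
- exact: wmin_gt0.
- exact: le_trans (w_le_denom t j) (denom_le t j).
Qed.

Lemma c_ms_gt0 : 0 < c_ms.
Proof. by apply: divr_gt0; [exact: wmin_gt0 | exact: lt_le_trans (denom_gt0 0 ord0) (denom_le 0 ord0)]. Qed.

Lemma c_ms_le1 : c_ms <= 1.
Proof.
have : am 0 ord0 ord0 <= 1.
  rewrite -(am1 0 ord0) (bigD1 ord0) //= lerDl; apply: sumr_ge0 => j _; exact: am0.
by have := am_diag 0 ord0; lra.
Qed.

Definition coord k t (i : 'I_N) := X t i k.

Lemma coord_step k t : coord k t.+1 = Az (am t) (coord k t).
Proof.
apply: functional_extensionality => i.
rewrite /coord /Az /am /X /= /bms_step -/(X t) !sum_toE RdivE -/(kw t i) mulr_suml.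
by apply: eq_bigr => j _; rewrite -[\sum_(j0 < N) _]/(denom t i) RmultE mulrAC.
Qed.

Lemma traj_cvg k (i : 'I_N) : exists L, cvg (fun t => X t i k) L.
Proof.
have [L hL] := dynamics_cvg am0 am1 am_diag am_sym c_ms_gt0 c_ms_le1 (coord_step k) i.
by exists L.
Qed.

Lemma traj_limits : exists y : nat -> vec,
  forall i k, (i < N)%N -> cvg (fun t => X t i k) (y i k).
Proof.
apply: (functional_choice (fun i (f : vec) =>
  forall k, (i < N)%N -> cvg (fun t => X t i k) (f k))) => i.
case: (ltnP i N) => [hi | _]; last by exists (fun=> 0).
have [f hf] := @functional_choice nat R (fun k L => cvg (fun t => X t i k) L)
  (fun k => traj_cvg k (Ordinal hi)).
by exists f.
Qed.

(* The hulls are nested: each step averages the current points. *)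
Lemma step_hull t i : (i < N)%N -> hull p N (X t) (X t.+1 i).
Proof.
move=> hi; exists (fun j => am t (Ordinal hi) (inord j)); split.
- by move=> j _; exact: am0.
- by rewrite -(am1 t (Ordinal hi)); apply: eq_bigr => j _; rewrite inord_val.
- move=> k hk; have := congr1 (fun f => f (Ordinal hi)) (coord_step k t).
  by rewrite /coord /Az /= => ->; apply: eq_bigr => j _; rewrite inord_val.
Qed.

Lemma nested s t i : (i < N)%N -> hull p N (X s) (X (s + t) i).
Proof.
elim: t i => [|t IH] i hi; first by rewrite addn0; exact: hull_pt.
by rewrite addnS; apply: (hull_trans (step_hull _ hi)) => j hj; exact: IH.
Qed.

Lemma limit_in_hull (y : nat -> vec) i s : (i < N)%N ->
  (forall k, (k < p)%N -> cvg (fun t => X t i k) (y i k)) -> hull p N (X s) (y i).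
Proof.
move=> hi hc; apply: (@hull_closed _ _ _ (fun t => X (s + t) i)).
  by move=> t; exact: nested.
by apply: cvg_cluster => k hk; exact: cvg_shift (hc k hk).
Qed.

Lemma C1_in_limit_hull (y : nat -> vec) (v : vec) :
  (forall i k, (i < N)%N -> cvg (fun t => X t i k) (y i k)) ->
  (forall t, hull p N (X t) v) -> hull p N y v.
Proof.
move=> hy hv.
have [lam hl] := functional_choice (fun t (l : nat -> R) =>
  [/\ forall j, (j < N)%N -> 0 <= l j, \sum_(j < N) l j = 1 &
      forall k, (k < p)%N -> v k = \sum_(j < N) l j * X t j k]) hv.
apply: (@hull_closed _ _ _ (fun t k => \sum_(j < N) lam t j * y j k)).
  by move=> t; have [h1 h2 _] := hl t; exists (lam t); split.
move=> eps he T; have he2 : 0 < eps / 2 by apply: divr_gt0.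
have [T0 hT0] := eventually_all
  (P := fun j t => forall k, (k < p)%N -> `|X t j k - y j k| < eps / 2)
  (fun j hj => eventually_all (P := fun k t => `|X t j k - y j k| < eps / 2)
     (fun k hk => hy j k hj (eps / 2) he2)).
exists (maxn T T0); split; first exact: leq_maxl.
move=> k hk; set t := maxn T T0; have [h1 h2 h3] := hl t.
rewrite (h3 k hk) -sumrB; apply: le_lt_trans (ler_norm_sum _ _ _) _.
apply: le_lt_trans (_ : \sum_(j < N) lam t j * (eps / 2) < _); last first.
  by rewrite -mulr_suml h2 mul1r; lra.
apply: ler_sum => j _; rewrite -mulrBr normrM ger0_norm ?h1 //.
by apply/ler_wpM2l/ltW; rewrite ?h1 // distrC; apply: hT0 => //; exact: leq_maxr.
Qed.

End MeanShift.

(* An extreme point v of a convex set S which is a convex combination of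
   points of S is one of these points: peeling off the last point Y M
   writes v = s * Y M + (1 - s) * u with u in S. *)
Section ExtremePoint.
Variables (p : nat) (S : vec -> Prop) (v : vec).
Hypothesis hconv : forall M Y u,
  hull p M Y u -> (forall j, (j < M)%N -> S (Y j)) -> S u.
Hypothesis Hv : extreme_point p S v.

Lemma extreme_is_vertex M (Y : nat -> vec) :
  (forall j, (j < M)%N -> S (Y j)) -> hull p M Y v ->
  exists j, (j < M)%N /\ forall k, (k < p)%N -> v k = Y j k.
Proof.
elim: M Y => [|M IH] Y hY hv; first by have := hull_nonempty hv.
have [lam [h1 h2 h3]] := hv.
have hs1 : lam M <= 1 by apply: weight_le1 h1 h2 _.
case: (ltP (lam M) 1) => [hlt | hge]; last first.
  exists M; split => // k hk; apply/eqP; rewrite -subr_eq0 -normr_le0.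
  by have := hull_near_last h1 h2 (h3 k hk); rewrite (_ : lam M = 1) ?subrr ?mul0r //; lra.
have hu := hull_peel h1 h2 h3 hlt.
have hY' j : (j < M)%N -> S (Y j) by move=> hj; apply: hY; apply: ltnW.
case: (eqVneq (lam M) 0) => [hs0 | hs0].
  have [|j [hj hjv]] := IH Y hY'.
    by apply: hull_ext hu => k _; rewrite hs0 mul0r !subr0 divr1.
  by exists j; split; first exact: ltnW.
have hs : Rlt 0 (lam M) /\ Rlt (lam M) 1.
  by split; apply/RltP => //; rewrite lt_neqAle eq_sym hs0 h1.
have hdec : veq p v (fun k => (lam M * Y M k + (1 - lam M) * ((v k - lam M * Y M k) / (1 - lam M)))%R).
  by move=> k _; field; rewrite subr_eq0 eq_sym lt_eqF.
have [hYM _] := Hv.2 _ _ _ (hY M (ltnSn M)) (hconv hu hY') hs hdec.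
by exists M; split => // k /ssrnat.ltP /hYM.
Qed.

End ExtremePoint.

Local Close Scope ring_scope.
Local Open Scope R_scope.

Theorem lemma2 (p N : nat) (x : nat -> vec) (w : nat -> R) (phi : R -> R)
  (Hw : forall j, lt j N -> Rlt 0 (w j))
  (Hf : PDD p phi)
  (v : vec)
  (Hv : extreme_point p (C1_set p N phi w x) v) :
  exists j, lt j N /\ vconv p (fun t : nat => bms p N phi w x t j) v.
Proof.
have hC1 u : C1_set p N phi w x u <-> forall t, hull p N (bms p N phi w x t) u.
  by split=> h t; apply/in_hullE; apply: h.
case: N Hw Hv hC1 => [|n] Hw Hv hC1.
  by have /hC1 /(_ 0%N) /hull_nonempty := Hv.1.
have Hw' j : (j < n.+1)%N -> (0 < w j)%R by move=> /ssrnat.ltP /Hw /RltP.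
have [y hy] := traj_limits x Hw' Hf.
have hconv M Y u : hull p M Y u -> (forall j, (j < M)%N -> C1_set p n.+1 phi w x (Y j)) ->
    C1_set p n.+1 phi w x u.
  by move=> hu hY; apply/hC1 => t; apply: (hull_trans hu) => j /hY /hC1.
have hyC1 i : (i < n.+1)%N -> C1_set p n.+1 phi w x (y i).
  by move=> hi; apply/hC1 => s; apply: (limit_in_hull Hw' Hf s hi) => k _; apply: hy.
have hvy : hull p n.+1 y v by apply: (C1_in_limit_hull hy); apply/hC1; exact: Hv.1.
have [j [hj hjv]] := extreme_is_vertex hconv Hv hyC1 hvy.
exists j; split; first exact/ssrnat.ltP.
by move=> k /ssrnat.ltP hk; rewrite (hjv k hk); apply: cvg_Un_cv; apply: hy.
Qed.
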